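(* Let $\alpha,\nu>0$ and let $u$ be a sufficiently smooth solution of the second grade fluid equations with Dirichlet boundary condition on $\Omega$. Set $v=u-\alpha\Delta u$ and $\gamma_i(t)=\int_{\Gamma_i}v(t)\cdot n^\perp$. Then for every $i\in\{1,\dots,N\}$ and $t\ge0$, $\gamma_i(t)=\gamma_i(0)e^{-\frac\nu\alpha t}$.
   Context: $\Omega\subset\mathbb R^2$ is a smooth bounded domain with $\partial\Omega=\Gamma\cup\Gamma_1\cup\dots\cup\Gamma_N$ ($\Gamma$ the outer boundary component, $\Gamma_1,\dots,\Gamma_N$ the inner components, smooth closed curves); $n$ outward unit normal, $n^\perp$ unit tangent. The second grade fluid equations with Dirichlet boundary condition are $\partial_t(u-\alpha\Delta u)-\nu\Delta u+u\cdot\nabla(u-\alpha\Delta u)+\sum_j(u-\alpha\Delta u)_j\nabla u_j=-\nabla\pi$, $\operatorname{div}u=0$ in $\Omega$, $u|_{\partial\Omega}=0$. *)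

From Stdlib Require Import Reals Lra List Classical ClassicalEpsilon.
Open Scope R_scope.

(** Derivative of a real function at a point, chosen classically
    (0 if the function is not differentiable there). *)
Definition deriv1 (g : R -> R) (x : R) : R :=
  match excluded_middle_informative (exists l, derivable_pt_lim g x l) with
  | left H => proj1_sig (constructive_indefinite_description _ H)
  | right _ => 0
  end.

(** Scalar fields on (time) x R^2 : f t x y. *)
Definition field3 := R -> R -> R -> R.

Inductive dir := Dt | Dx | Dy.

Definition pdt (f : field3) : field3 := fun t x y => deriv1 (fun s => f s x y) t.
Definition pdx (f : field3) : field3 := fun t x y => deriv1 (fun s => f t s y) x.
Definition pdy (f : field3) : field3 := fun t x y => deriv1 (fun s => f t x s) y.

Definition pd (d : dir) (f : field3) : field3 :=
  match d with Dt => pdt f | Dx => pdx f | Dy => pdy f end.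

Definition has_pd (d : dir) (f : field3) : Prop :=
  forall t x y, exists l,
    match d with
    | Dt => derivable_pt_lim (fun s => f s x y) t l
    | Dx => derivable_pt_lim (fun s => f t s y) x l
    | Dy => derivable_pt_lim (fun s => f t x s) y l
    end.

Fixpoint iter_pd (l : list dir) (f : field3) : field3 :=
  match l with nil => f | d :: l' => pd d (iter_pd l' f) end.

Definition continuous3 (f : field3) : Prop :=
  forall t x y eps, 0 < eps -> exists delta, 0 < delta /\
    forall t' x' y', Rabs (t' - t) < delta -> Rabs (x' - x) < delta ->
      Rabs (y' - y) < delta -> Rabs (f t' x' y' - f t x y) < eps.

Definition smooth3 (f : field3) : Prop :=
  forall l : list dir, continuous3 (iter_pd l f) /\
    forall d, has_pd d (iter_pd l f).

Definition smooth1 (g : R -> R) : Prop :=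
  exists D : nat -> R -> R, D O = g /\
    forall n x, derivable_pt_lim (D n) x (D (S n) x).

Definition laplacian (f : field3) : field3 :=
  fun t x y => pdx (pdx f) t x y + pdy (pdy f) t x y.

Definition vfield (alpha : R) (f : field3) : field3 :=
  fun t x y => f t x y - alpha * laplacian f t x y.

Definition sgf_eq (alpha nu : R) (u1 u2 p : field3) (t x y : R) : Prop :=
  let v1 := vfield alpha u1 in
  let v2 := vfield alpha u2 in
  pdt v1 t x y - nu * laplacian u1 t x y
    + (u1 t x y * pdx v1 t x y + u2 t x y * pdy v1 t x y)
    + (v1 t x y * pdx u1 t x y + v2 t x y * pdx u2 t x y)
    = - pdx p t x y
  /\
  pdt v2 t x y - nu * laplacian u2 t x y
    + (u1 t x y * pdx v2 t x y + u2 t x y * pdy v2 t x y)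
    + (v1 t x y * pdy u1 t x y + v2 t x y * pdy u2 t x y)
    = - pdy p t x y
  /\
  pdx u1 t x y + pdy u2 t x y = 0.

Definition open2 (O : R -> R -> Prop) : Prop :=
  forall x y, O x y -> exists r, 0 < r /\
    forall x' y', (x' - x)^2 + (y' - y)^2 < r^2 -> O x' y'.

Definition bounded2 (O : R -> R -> Prop) : Prop :=
  exists M, forall x y, O x y -> x^2 + y^2 <= M.

Definition connected_open2 (O : R -> R -> Prop) : Prop :=
  forall A B : R -> R -> Prop, open2 A -> open2 B ->
    (forall x y, O x y <-> A x y \/ B x y) ->
    (forall x y, ~ (A x y /\ B x y)) ->
    (forall x y, ~ A x y) \/ (forall x y, ~ B x y).

Definition closure2 (O : R -> R -> Prop) (x y : R) : Prop :=
  forall eps, 0 < eps -> exists x' y', O x' y' /\ (x' - x)^2 + (y' - y)^2 < eps.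

Definition boundary2 (O : R -> R -> Prop) (x y : R) : Prop :=
  closure2 O x y /\ ~ O x y.

Definition smooth_simple_closed_curve (cx cy : R -> R) : Prop :=
  smooth1 cx /\ smooth1 cy /\
  (forall s, cx (s + 1) = cx s /\ cy (s + 1) = cy s) /\
  (forall s, 0 < (deriv1 cx s)^2 + (deriv1 cy s)^2) /\
  (forall s s', 0 <= s < 1 -> 0 <= s' < 1 -> cx s = cx s' -> cy s = cy s' -> s = s').

(** Integrand of the line integral of the field (w1,w2)(t) along the curve
    (cx,cy): (w . c'(s)) ds  =  (w . n^perp) d sigma. *)
Definition circ_integrand (w1 w2 : field3) (cx cy : R -> R) (t : R) : R -> R :=
  fun s => w1 t (cx s) (cy s) * deriv1 cx s + w2 t (cx s) (cy s) * deriv1 cy s.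

(** On a boundary curve the no-slip condition gives [u = 0], hence [v = - alpha Lap u],
    and the tangential derivatives of [u1], [u2] vanish.  By continuity the momentum
    equation holds up to the boundary, and its tangential component reduces there to
    [d_t (v . tau) = - (nu / alpha) (v . tau) - d_tau pi]: the transport term [u . grad v]
    and [sum_j v_j d_tau u_j] drop out.  Integrating over the closed curve kills the
    exact pressure term, so the circulation satisfies [gamma' = - (nu / alpha) gamma]
    for [t > 0], and therefore decays exponentially. *)

From Stdlib Require Import Reals Lra ClassicalEpsilon FunctionalExtensionality.
From Coquelicot Require Import Coquelicot.
Open Scope R_scope.

Lemma deriv1_of_derivable_pt_lim (g : R -> R) (x l : R) :
  derivable_pt_lim g x l -> deriv1 g x = l.
Proof.
  intro Hl. unfold deriv1.
  destruct (excluded_middle_informative _) as [Hex | Hnex].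
  - destruct (constructive_indefinite_description _ Hex) as [l' Hl']; simpl.
    exact (uniqueness_limite _ _ _ _ Hl' Hl).
  - exfalso; exact (Hnex (ex_intro _ l Hl)).
Qed.

Lemma continuity_pt_eps (g : R -> R) (s : R) : continuity_pt g s ->
  forall eps, 0 < eps -> exists d, 0 < d /\
    forall s', Rabs (s' - s) < d -> Rabs (g s' - g s) < eps.
Proof.
  intros Hg eps Heps. destruct (Hg eps Heps) as [d [Hd Hball]].
  exists d; split; [exact Hd |]. intros s' Hs'.
  destruct (Req_dec s' s) as [-> | Hne].
  - rewrite Rminus_eq_0, Rabs_R0; exact Heps.
  - apply Hball. split; [split; [exact I | auto] | exact Hs'].
Qed.

Lemma continuity_2d_pt_section (f : R -> R -> R) (t s : R) :
  continuity_2d_pt f t s -> continuity_pt (fun s => f t s) s.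
Proof.
  intros Hf eps Heps. destruct (Hf (mkposreal eps Heps)) as [d Hd].
  exists d; split; [apply cond_pos |]. intros s' [_ Hs']. simpl in *. unfold R_dist in *.
  apply Hd; [rewrite Rminus_eq_0, Rabs_R0; apply cond_pos | exact Hs'].
Qed.

Lemma continuity_2d_pt_snd (g : R -> R) (t s : R) :
  continuity_pt g s -> continuity_2d_pt (fun _ s => g s) t s.
Proof.
  intros Hg eps. destruct (continuity_pt_eps g s Hg eps (cond_pos eps)) as [d [Hd Hball]].
  exists (mkposreal d Hd). intros t' s' _ Hs'. exact (Hball s' Hs').
Qed.

Lemma derivable_pt_lim_mult_const (f : R -> R) (c x l : R) :
  derivable_pt_lim f x l -> derivable_pt_lim (fun y => f y * c) x (l * c).
Proof.
  intro Hf. replace (fun y => f y * c) with (mult_real_fct c f)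
    by (apply functional_extensionality; intro; unfold mult_real_fct; ring).
  rewrite Rmult_comm. exact (derivable_pt_lim_scal f c x l Hf).
Qed.

Lemma MVT_unordered (f f' : R -> R) (a b : R) :
  (forall c, derivable_pt_lim f c (f' c)) ->
  exists c, f b - f a = f' c * (b - a) /\ Rabs (c - a) <= Rabs (b - a).
Proof.
  intro Hf. destruct (Rtotal_order a b) as [Hab | [-> | Hab]].
  - destruct (MVT_cor2 f f' a b Hab (fun c _ => Hf c)) as [c [E Hc]].
    exists c; split; [exact E |]. rewrite !Rabs_right; lra.
  - exists b. rewrite !Rminus_eq_0; split; [ring | lra].
  - destruct (MVT_cor2 f f' b a Hab (fun c _ => Hf c)) as [c [E Hc]].
    exists c; split; [lra |]. rewrite !Rabs_left; lra.
Qed.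

Lemma differentiable_pt_lim_of_partials (g gx gy : R -> R -> R) (x y : R) :
  (forall u v, derivable_pt_lim (fun z => g z v) u (gx u v)) ->
  (forall u v, derivable_pt_lim (fun z => g u z) v (gy u v)) ->
  continuity_2d_pt gx x y -> continuity_pt (fun v => gy x v) y ->
  differentiable_pt_lim g x y (gx x y) (gy x y).
Proof.
  intros Hgx Hgy Cx Cy eps.
  assert (He2 : 0 < eps / 2) by (generalize (cond_pos eps); lra).
  destruct (Cx (mkposreal _ He2)) as [d1 H1].
  destruct (continuity_pt_eps _ _ Cy _ He2) as [d2 [Hd2 H2]].
  assert (Hd : 0 < Rmin d1 d2) by (apply Rmin_pos; [apply cond_pos | exact Hd2]).
  exists (mkposreal _ Hd). intros u v Hu Hv; simpl in Hu, Hv.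
  pose proof (Rmin_l d1 d2); pose proof (Rmin_r d1 d2).
  (* Split the increment along the two axes and apply the mean value theorem to each. *)
  destruct (MVT_unordered (fun z => g z v) (fun z => gx z v) x u (fun c => Hgx c v))
    as [c [Ec Hc]].
  destruct (MVT_unordered (fun z => g x z) (fun z => gy x z) y v (fun c => Hgy x c))
    as [e [Ee He]].
  simpl in Ec, Ee.
  assert (Q1 : Rabs (gx c v - gx x y) < eps / 2) by (apply H1; lra).
  assert (Q2 : Rabs (gy x e - gy x y) < eps / 2) by (apply H2; lra).
  replace (g u v - g x y - (gx x y * (u - x) + gy x y * (v - y)))
    with ((gx c v - gx x y) * (u - x) + (gy x e - gy x y) * (v - y)) by lra.
  eapply Rle_trans; [apply Rabs_triang |]. rewrite !Rabs_mult.
  pose proof (Rmax_l (Rabs (u - x)) (Rabs (v - y))).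
  pose proof (Rmax_r (Rabs (u - x)) (Rabs (v - y))).
  pose proof (Rabs_pos (u - x)); pose proof (Rabs_pos (v - y)).
  pose proof (Rabs_pos (gx c v - gx x y)); pose proof (Rabs_pos (gy x e - gy x y)).
  apply Rle_trans with (eps / 2 * Rabs (u - x) + eps / 2 * Rabs (v - y)).
  - apply Rplus_le_compat; apply Rmult_le_compat_r; lra.
  - generalize (cond_pos eps); nra.
Qed.

Lemma ex_RInt_of_continuity_pt (f : R -> R) (a b : R) :
  (forall z, continuity_pt f z) -> ex_RInt f a b.
Proof.
  intro Hf. apply (@ex_RInt_continuous R_CompleteNormedModule). intros z _. apply continuity_pt_filterlim, Hf.
Qed.

Lemma RInt_derive_eq_0 (f df : R -> R) (a b : R) :
  (forall s, is_derive f s (df s)) -> (forall s, continuity_pt df s) ->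
  f b = f a -> RInt df a b = 0.
Proof.
  intros Hf Cdf Hab.
  assert (Edf : Derive f = df)
    by (apply functional_extensionality; intro s; apply is_derive_unique, Hf).
  rewrite <- Edf, RInt_Derive.
  - rewrite Hab; apply Rminus_eq_0.
  - intros s _. exists (df s); apply Hf.
  - intros s _. rewrite Edf. apply continuity_pt_filterlim, Cdf.
Qed.

Lemma is_derive_RInt_param_continuous (h dh : R -> R -> R) (a b t : R) :
  (forall t s, is_derive (fun t => h t s) t (dh t s)) ->
  (forall t s, continuity_2d_pt h t s) -> (forall t s, continuity_2d_pt dh t s) ->
  is_derive (fun t => RInt (h t) a b) t (RInt (dh t) a b).
Proof.
  intros Hh Ch Cdh.
  assert (Edh : forall t s, Derive (fun t => h t s) t = dh t s)
    by (intros; apply is_derive_unique, Hh).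
  rewrite <- (RInt_ext (fun s => Derive (fun t => h t s) t)) by (intros; apply Edh).
  apply is_derive_RInt_param.
  - apply filter_forall. intros t' s _. exists (dh t' s); apply Hh.
  - intros s _. apply (continuity_2d_pt_ext dh); [intros; symmetry; apply Edh | apply Cdh].
  - apply filter_forall. intro t'.
    apply ex_RInt_of_continuity_pt. intro s; apply continuity_2d_pt_section, Ch.
Qed.

(* [g t * exp (k t)] has zero derivative for [t > 0]. *)
Lemma exp_decay_of_derivative (g g' : R -> R) (k : R) :
  (forall c, derivable_pt_lim g c (g' c)) -> (forall c, 0 < c -> g' c = - k * g c) ->
  forall t, 0 <= t -> g t = g 0 * exp (- k * t).
Proof.
  intros Hg Hode t Ht.
  set (G := fun t => g t * exp (k * t)).
  assert (HG : forall c, derivable_pt_lim G c (g' c * exp (k * c) + g c * (exp (k * c) * (k * 1)))).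
  { intro c. apply (derivable_pt_lim_mult g (fun t => exp (k * t))); [apply Hg |].
    apply (derivable_pt_lim_comp (fun t => k * t) exp).
    - apply derivable_pt_lim_scal, derivable_pt_lim_id.
    - apply derivable_pt_lim_exp. }
  assert (EG : G t = G 0).
  { destruct (Rle_lt_or_eq_dec 0 t Ht) as [Hlt | <-]; [| reflexivity].
    destruct (MVT_cor2 G _ 0 t Hlt (fun c _ => HG c)) as [c [Ec Hc]].
    rewrite Hode in Ec by lra. lra. }
  unfold G in EG. rewrite Rmult_0_r, exp_0, Rmult_1_r in EG.
  rewrite <- EG, Rmult_assoc, <- exp_plus.
  replace (k * t + - k * t) with 0 by ring. rewrite exp_0. ring.
Qed.

Lemma smooth3_partials (f : field3) (l : list dir) (t x y : R) : smooth3 f ->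
  derivable_pt_lim (fun s => iter_pd l f s x y) t (iter_pd (Dt :: l) f t x y) /\
  derivable_pt_lim (fun s => iter_pd l f t s y) x (iter_pd (Dx :: l) f t x y) /\
  derivable_pt_lim (fun s => iter_pd l f t x s) y (iter_pd (Dy :: l) f t x y).
Proof.
  intro Hf. destruct (Hf l) as [_ Hpd].
  destruct (Hpd Dt t x y) as [lt Hlt], (Hpd Dx t x y) as [lx Hlx], (Hpd Dy t x y) as [ly Hly].
  cbn [iter_pd pd]; unfold pdt, pdx, pdy.
  rewrite (deriv1_of_derivable_pt_lim _ _ _ Hlt), (deriv1_of_derivable_pt_lim _ _ _ Hlx),
    (deriv1_of_derivable_pt_lim _ _ _ Hly).
  auto.
Qed.

Lemma iter_pd_app (l l' : list dir) (f : field3) :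
  iter_pd (l ++ l') f = iter_pd l (iter_pd l' f).
Proof. induction l as [| d l IHl]; simpl; [reflexivity | now rewrite IHl]. Qed.

Lemma smooth3_pd (d : dir) (f : field3) : smooth3 f -> smooth3 (pd d f).
Proof.
  intros Hf l. change (pd d f) with (iter_pd (d :: nil) f).
  rewrite <- iter_pd_app. apply Hf.
Qed.

Lemma smooth3_continuous (f : field3) : smooth3 f -> continuous3 f.
Proof. intro Hf. exact (proj1 (Hf nil)). Qed.

Lemma continuity_2d_pt_slice (F : field3) (t x y : R) :
  continuous3 F -> continuity_2d_pt (fun x y => F t x y) x y.
Proof.
  intros HF eps. destruct (HF t x y eps (cond_pos eps)) as [d [Hd Hball]].
  exists (mkposreal d Hd). intros x' y' Hx Hy. apply Hball; [| exact Hx | exact Hy].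
  rewrite Rminus_eq_0, Rabs_R0; exact Hd.
Qed.

Lemma continuity_2d_pt_along_curve (F : field3) (X Y : R -> R) (t s : R) :
  continuous3 F -> continuity_pt X s -> continuity_pt Y s ->
  continuity_2d_pt (fun t s => F t (X s) (Y s)) t s.
Proof.
  intros HF HX HY eps. destruct (HF t (X s) (Y s) eps (cond_pos eps)) as [d [Hd Hball]].
  destruct (continuity_pt_eps X s HX d Hd) as [dX [HdX HballX]].
  destruct (continuity_pt_eps Y s HY d Hd) as [dY [HdY HballY]].
  assert (Hm : 0 < Rmin d (Rmin dX dY)) by (repeat apply Rmin_pos; assumption).
  exists (mkposreal _ Hm). intros t' s' Ht Hs; simpl in Ht, Hs.
  pose proof (Rmin_l d (Rmin dX dY)); pose proof (Rmin_r d (Rmin dX dY)).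
  pose proof (Rmin_l dX dY); pose proof (Rmin_r dX dY).
  apply Hball; [lra | apply HballX | apply HballY]; lra.
Qed.

Ltac solve_smooth3 :=
  apply smooth3_continuous;
  repeat first [ apply smooth3_pd | apply (smooth3_pd Dx) | apply (smooth3_pd Dy) ];
  assumption.

Ltac solve_continuity_2d := repeat first
  [ apply continuity_2d_pt_minus | apply continuity_2d_pt_plus
  | apply continuity_2d_pt_mult | apply continuity_2d_pt_const
  | apply continuity_2d_pt_slice; solve_smooth3
  | apply continuity_2d_pt_along_curve; [solve_smooth3 | auto | auto]
  | apply continuity_2d_pt_snd; auto ].

(* [pd d (vfield alpha f)] computed term by term; [d] is applied last, so no
   symmetry of second derivatives is needed (see [pd_vfield]). *)
Definition vfield_pd (alpha : R) (d : dir) (f : field3) : field3 :=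
  fun t x y => pd d f t x y - alpha * (pd d (pdx (pdx f)) t x y + pd d (pdy (pdy f)) t x y).

Lemma vfield_partials (alpha : R) (f : field3) (t x y : R) : smooth3 f ->
  derivable_pt_lim (fun s => vfield alpha f s x y) t (vfield_pd alpha Dt f t x y) /\
  derivable_pt_lim (fun s => vfield alpha f t s y) x (vfield_pd alpha Dx f t x y) /\
  derivable_pt_lim (fun s => vfield alpha f t x s) y (vfield_pd alpha Dy f t x y).
Proof.
  intro Hf.
  destruct (smooth3_partials f nil t x y Hf) as [Ht [Hx Hy]].
  destruct (smooth3_partials f (Dx :: Dx :: nil) t x y Hf) as [Htxx [Hxxx Hyxx]].
  destruct (smooth3_partials f (Dy :: Dy :: nil) t x y Hf) as [Htyy [Hxyy Hyyy]].
  unfold vfield_pd; repeat split;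
    apply derivable_pt_lim_minus; try apply derivable_pt_lim_scal;
    try apply derivable_pt_lim_plus; assumption.
Qed.

Lemma pd_vfield (alpha : R) (d : dir) (f : field3) (t x y : R) : smooth3 f ->
  pd d (vfield alpha f) t x y = vfield_pd alpha d f t x y.
Proof.
  intro Hf. destruct (vfield_partials alpha f t x y Hf) as [Ht [Hx Hy]].
  destruct d; apply deriv1_of_derivable_pt_lim; assumption.
Qed.

Lemma derivable_pt_lim_along_curve (f : field3) (X Y : R -> R) (t s X' Y' : R) :
  smooth3 f -> derivable_pt_lim X s X' -> derivable_pt_lim Y s Y' ->
  derivable_pt_lim (fun s => f t (X s) (Y s)) s
    (pdx f t (X s) (Y s) * X' + pdy f t (X s) (Y s) * Y').
Proof.
  intros Hf HX HY.
  apply (derivable_pt_lim_comp_2d (fun a b => f t a b)); [| exact HX | exact HY].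
  apply (differentiable_pt_lim_of_partials _ (fun a b => pdx f t a b) (fun a b => pdy f t a b)).
  - intros a b. exact (proj1 (proj2 (smooth3_partials f nil t a b Hf))).
  - intros a b. exact (proj2 (proj2 (smooth3_partials f nil t a b Hf))).
  - solve_continuity_2d.
  - apply (continuity_2d_pt_section (fun a b => pdy f t a b)). solve_continuity_2d.
Qed.

Lemma tangential_derivative_eq_0 (f : field3) (X Y : R -> R) (t s X' Y' : R) :
  smooth3 f -> derivable_pt_lim X s X' -> derivable_pt_lim Y s Y' ->
  (forall s, f t (X s) (Y s) = 0) ->
  pdx f t (X s) (Y s) * X' + pdy f t (X s) (Y s) * Y' = 0.
Proof.
  intros Hf HX HY Hzero.
  pose proof (derivable_pt_lim_along_curve f X Y t s X' Y' Hf HX HY) as Hd.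
  replace (fun s => f t (X s) (Y s)) with (fct_cte 0) in Hd
    by (apply functional_extensionality; intro; symmetry; apply Hzero).
  exact (uniqueness_limite _ _ _ _ Hd (derivable_pt_lim_const 0 s)).
Qed.

Lemma continuous_zero_on_closure (O : R -> R -> Prop) (F : R -> R -> R) (x y : R) :
  continuity_2d_pt F x y -> (forall a b, O a b -> F a b = 0) -> closure2 O x y ->
  F x y = 0.
Proof.
  intros HF HO Hcl. destruct (Req_dec (F x y) 0) as [| Hne]; [assumption | exfalso].
  destruct (continuity_2d_pt_neq_0 F x y HF Hne) as [d Hd].
  pose proof (cond_pos d) as Hdpos.
  destruct (Hcl (d * d)) as [a [b [Oab Hab]]]; [nra |].
  pose proof (pow2_ge_0 (a - x)); pose proof (pow2_ge_0 (b - y)).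
  apply (Hd a b); [| | exact (HO a b Oab)]; apply Rabs_def1; nra.
Qed.

(* Left side minus right side of the momentum equation for the component [uk]
   ([k = Dx, uk = u1] or [k = Dy, uk = u2]), with the derivatives of [v] written
   through [vfield_pd] so that it is visibly continuous up to the boundary. *)
Definition momentum_residual (alpha nu : R) (u1 u2 p uk : field3) (k : dir) : field3 :=
  fun t x y =>
    vfield_pd alpha Dt uk t x y - nu * laplacian uk t x y
    + (u1 t x y * vfield_pd alpha Dx uk t x y + u2 t x y * vfield_pd alpha Dy uk t x y)
    + (vfield alpha u1 t x y * pd k u1 t x y + vfield alpha u2 t x y * pd k u2 t x y)
    + pd k p t x y.

Lemma momentum_residual_continuity (alpha nu : R) (u1 u2 p uk : field3) (k : dir) (t x y : R) :
  smooth3 u1 -> smooth3 u2 -> smooth3 p -> smooth3 uk ->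
  continuity_2d_pt (fun x y => momentum_residual alpha nu u1 u2 p uk k t x y) x y.
Proof.
  intros. unfold momentum_residual, vfield_pd, vfield, laplacian. solve_continuity_2d.
Qed.

Lemma sgf_eq_momentum_residual (alpha nu : R) (u1 u2 p : field3) (t x y : R) :
  smooth3 u1 -> smooth3 u2 -> sgf_eq alpha nu u1 u2 p t x y ->
  momentum_residual alpha nu u1 u2 p u1 Dx t x y = 0 /\
  momentum_residual alpha nu u1 u2 p u2 Dy t x y = 0.
Proof.
  intros Hu1 Hu2 [E1 [E2 _]]. unfold momentum_residual.
  rewrite <- !(pd_vfield alpha Dt), <- !(pd_vfield alpha Dx), <- !(pd_vfield alpha Dy)
    by assumption.
  cbn [pd]. split; lra.
Qed.

Lemma momentum_residual_on_boundary (alpha nu : R) (Omega : R -> R -> Prop)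
    (u1 u2 p : field3) (t x y : R) :
  smooth3 u1 -> smooth3 u2 -> smooth3 p ->
  (forall x y, Omega x y -> sgf_eq alpha nu u1 u2 p t x y) -> closure2 Omega x y ->
  momentum_residual alpha nu u1 u2 p u1 Dx t x y = 0 /\
  momentum_residual alpha nu u1 u2 p u2 Dy t x y = 0.
Proof.
  intros Hu1 Hu2 Hp Heq Hcl.
  split; apply (continuous_zero_on_closure Omega); try exact Hcl;
    try (apply momentum_residual_continuity; assumption);
    intros a b Hab; apply (sgf_eq_momentum_residual alpha nu u1 u2 p t a b Hu1 Hu2), Heq, Hab.
Qed.

Section Circulation.

Variables (alpha nu : R) (u1 u2 p : field3) (X Y : R -> R).
Hypotheses (Halpha : 0 < alpha) (Hu1 : smooth3 u1) (Hu2 : smooth3 u2) (Hp : smooth3 p).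
Hypotheses (HX : forall s, derivable_pt_lim X s (deriv1 X s))
  (HY : forall s, derivable_pt_lim Y s (deriv1 Y s))
  (CX' : forall s, continuity_pt (deriv1 X) s) (CY' : forall s, continuity_pt (deriv1 Y) s).
Hypotheses (HX1 : X 1 = X 0) (HY1 : Y 1 = Y 0).
Hypothesis Hnoslip : forall t s, 0 < t -> u1 t (X s) (Y s) = 0 /\ u2 t (X s) (Y s) = 0.
Hypothesis Hmomentum : forall t s, 0 < t ->
  momentum_residual alpha nu u1 u2 p u1 Dx t (X s) (Y s) = 0 /\
  momentum_residual alpha nu u1 u2 p u2 Dy t (X s) (Y s) = 0.

Let CX (s : R) : continuity_pt X s := derivable_continuous_pt _ _ (exist _ _ (HX s)).
Let CY (s : R) : continuity_pt Y s := derivable_continuous_pt _ _ (exist _ _ (HY s)).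

Let circ := circ_integrand (vfield alpha u1) (vfield alpha u2) X Y.
Let circ_dt := circ_integrand (vfield_pd alpha Dt u1) (vfield_pd alpha Dt u2) X Y.
Let circ_p := circ_integrand (pdx p) (pdy p) X Y.

Lemma circ_continuity (t s : R) : continuity_2d_pt circ t s.
Proof. unfold circ, circ_integrand, vfield, laplacian. solve_continuity_2d. Qed.

Lemma circ_dt_continuity (t s : R) : continuity_2d_pt circ_dt t s.
Proof. unfold circ_dt, circ_integrand, vfield_pd. solve_continuity_2d. Qed.

Lemma circ_p_continuity (t s : R) : continuity_2d_pt circ_p t s.
Proof. unfold circ_p, circ_integrand. solve_continuity_2d. Qed.

Lemma circ_ex_RInt (t : R) : ex_RInt (circ t) 0 1.
Proof.
  apply ex_RInt_of_continuity_pt. intro s. apply continuity_2d_pt_section, circ_continuity.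
Qed.

Lemma circ_is_derive_t (t s : R) : is_derive (fun t => circ t s) t (circ_dt t s).
Proof.
  apply is_derive_Reals. unfold circ, circ_dt, circ_integrand.
  apply derivable_pt_lim_plus; apply derivable_pt_lim_mult_const;
    apply vfield_partials; assumption.
Qed.

Lemma circ_p_integral_eq_0 (t : R) : RInt (circ_p t) 0 1 = 0.
Proof.
  apply (RInt_derive_eq_0 (fun s => p t (X s) (Y s))).
  - intro s. apply is_derive_Reals, derivable_pt_lim_along_curve; auto.
  - intro s. apply (continuity_2d_pt_section circ_p), circ_p_continuity.
  - rewrite HX1, HY1; reflexivity.
Qed.

(* The two sides differ by [X' R_1 + Y' R_2 - v_1 T_1 - v_2 T_2], where [R_k] are the
   momentum residuals and [T_j] the tangential derivatives of [u_j], all zero. *)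
Lemma circ_dt_on_curve (t s : R) : 0 < t ->
  circ_dt t s = - (nu / alpha) * circ t s - circ_p t s.
Proof.
  intro Ht.
  destruct (Hnoslip t s Ht) as [Z1 Z2]. destruct (Hmomentum t s Ht) as [R1 R2].
  assert (T1 := tangential_derivative_eq_0 u1 X Y t s _ _ Hu1 (HX s) (HY s)
                  (fun s => proj1 (Hnoslip t s Ht))).
  assert (T2 := tangential_derivative_eq_0 u2 X Y t s _ _ Hu2 (HX s) (HY s)
                  (fun s => proj2 (Hnoslip t s Ht))).
  unfold momentum_residual in R1, R2.
  unfold circ_dt, circ, circ_p, circ_integrand. cbn [pd] in *.
  unfold vfield in *. rewrite Z1, Z2 in *.
  set (L1 := laplacian u1 t (X s) (Y s)) in *; set (L2 := laplacian u2 t (X s) (Y s)) in *.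
  replace (- (nu / alpha) * ((0 - alpha * L1) * deriv1 X s + (0 - alpha * L2) * deriv1 Y s))
    with (nu * (L1 * deriv1 X s + L2 * deriv1 Y s)) by (field; lra).
  pose proof (f_equal (Rmult (deriv1 X s)) R1); pose proof (f_equal (Rmult (deriv1 Y s)) R2).
  pose proof (f_equal (Rmult (alpha * L1)) T1); pose proof (f_equal (Rmult (alpha * L2)) T2).
  lra.
Qed.

Lemma circ_integral_derive_on_curve (t : R) : 0 < t ->
  RInt (circ_dt t) 0 1 = - (nu / alpha) * RInt (circ t) 0 1.
Proof.
  intro Ht.
  pose proof (circ_ex_RInt t) as Icirc.
  assert (Icirc_p : ex_RInt (circ_p t) 0 1).
  { apply ex_RInt_of_continuity_pt. intro s. apply continuity_2d_pt_section, circ_p_continuity. }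
  set (k := - (nu / alpha)).
  pose proof (@RInt_scal R_CompleteNormedModule (circ t) 0 1 k Icirc) as Escal.
  pose proof (@RInt_minus R_CompleteNormedModule (fun s => scal k (circ t s)) (circ_p t) 0 1
                (@ex_RInt_scal R_CompleteNormedModule (circ t) 0 1 k Icirc) Icirc_p) as Eminus.
  transitivity (RInt (fun s => minus (scal k (circ t s)) (circ_p t s)) 0 1).
  { apply RInt_ext. intros s _. apply circ_dt_on_curve, Ht. }
  etransitivity; [apply Eminus |].
  pose proof (circ_p_integral_eq_0 t) as Ep.
  unfold minus, opp, plus, scal in *; simpl in *; unfold mult in *; simpl in *.
  rewrite Ep, Escal. ring.
Qed.

Lemma circulation_exp_decay (t : R) : 0 <= t ->
  RInt (circ t) 0 1 = RInt (circ 0) 0 1 * exp (- (nu / alpha) * t).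
Proof.
  apply (exp_decay_of_derivative (fun t => RInt (circ t) 0 1) (fun t => RInt (circ_dt t) 0 1)).
  - intro c. apply is_derive_Reals, is_derive_RInt_param_continuous.
    + exact circ_is_derive_t.
    + exact circ_continuity.
    + exact circ_dt_continuity.
  - exact circ_integral_derive_on_curve.
Qed.

End Circulation.

Lemma smooth1_C1 (g : R -> R) : smooth1 g ->
  (forall s, derivable_pt_lim g s (deriv1 g s)) /\ (forall s, continuity_pt (deriv1 g) s).
Proof.
  intros [D [D0 HD]]. subst g.
  assert (E : deriv1 (D O) = D 1%nat)
    by (apply functional_extensionality; intro s; apply deriv1_of_derivable_pt_lim, HD).
  split; intro s; rewrite E.
  - apply HD.
  - apply derivable_continuous_pt. exists (D 2%nat s). apply HD.
Qed.

Theorem lemma6p4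
  (alpha nu : R) (Halpha : 0 < alpha) (Hnu : 0 < nu)
  (Omega : R -> R -> Prop) (N : nat) (cx cy : nat -> R -> R)
  (HOopen : open2 Omega) (HObdd : bounded2 Omega) (HOconn : connected_open2 Omega)
  (Hcurves : forall i, (i <= N)%nat -> smooth_simple_closed_curve (cx i) (cy i))
  (Hdisj : forall i j s s', (i <= N)%nat -> (j <= N)%nat -> i <> j ->
             ~ (cx i s = cx j s' /\ cy i s = cy j s'))
  (Hbdry : forall x y, boundary2 Omega x y <->
             exists i s, (i <= N)%nat /\ x = cx i s /\ y = cy i s)
  (Houter : exists s0, forall i s, (i <= N)%nat ->
             (cx i s)^2 + (cy i s)^2 <= (cx 0%nat s0)^2 + (cy 0%nat s0)^2)
  (u1 u2 p : field3)
  (Hu1 : smooth3 u1) (Hu2 : smooth3 u2) (Hp : smooth3 p)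
  (Heq : forall t x y, 0 < t -> Omega x y -> sgf_eq alpha nu u1 u2 p t x y)
  (HDir : forall t x y, 0 < t -> boundary2 Omega x y -> u1 t x y = 0 /\ u2 t x y = 0) :
  forall i, (1 <= i <= N)%nat -> forall t, 0 <= t ->
    exists (prt : Riemann_integrable
                    (circ_integrand (vfield alpha u1) (vfield alpha u2) (cx i) (cy i) t) 0 1)
           (pr0 : Riemann_integrable
                    (circ_integrand (vfield alpha u1) (vfield alpha u2) (cx i) (cy i) 0) 0 1),
      RiemannInt prt = RiemannInt pr0 * exp (- (nu / alpha) * t).
Proof.
  intros i [_ HiN] t Ht.
  destruct (Hcurves i HiN) as [HX [HY [Hper _]]].
  destruct (smooth1_C1 _ HX) as [DX CX'], (smooth1_C1 _ HY) as [DY CY'].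
  assert (Hon : forall s, boundary2 Omega (cx i s) (cy i s))
    by (intro s; apply Hbdry; exists i, s; auto).
  destruct (Hper 0) as [HX1 HY1]; rewrite Rplus_0_l in HX1, HY1.
  pose proof (circ_ex_RInt alpha u1 u2 _ _ Hu1 Hu2 DX DY CX' CY') as Hint.
  exists (ex_RInt_Reals_0 _ _ _ (Hint t)), (ex_RInt_Reals_0 _ _ _ (Hint 0)).
  rewrite <- !RInt_Reals.
  apply (circulation_exp_decay alpha nu u1 u2 p); try assumption.
  - intros t' s Ht'. apply HDir, Hon; exact Ht'.
  - intros t' s Ht'. apply (momentum_residual_on_boundary alpha nu Omega); auto.
    exact (proj1 (Hon s)).
Qed.
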